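(* Let $G=(V,E)$ be a finite simple connected graph with at least one edge, let $s$ be a positive integer, and let $G_s=(V_s,E_s)$ be its $s$-th subdivision graph. Then $$4|E_s|\sum_{e_{ij}\in E_s} d_i d_j-\Big[\sum_{e_{ij}\in E_s}(d_i+d_j)\Big]^2=-\Big[\sum_{e_{uv}\in E}(d_u+d_v-4)\Big]^2,$$ where degrees on the left are taken in $G_s$ and degrees on the right in $G$.
   Context: The $s$-th subdivision graph $G_s$ of $G$ is obtained by inserting $s$ new vertices into each edge of $G$ (replacing each edge by a path with $s$ internal vertices). $d_u$ denotes degree; sums over edges count each edge once. *)

From mathcomp Require Import all_boot all_order all_algebra.

Section Graphs.
Variable T : finType.

Definition simple_graph (e : rel T) := symmetric e /\ irreflexive e.
Definition connected_graph (e : rel T) := forall x y, connect e x y.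

Definition edges (e : rel T) : {set {set T}} :=
  [set [set p.1; p.2] | p in [pred p : T * T | e p.1 p.2]].

Definition deg (e : rel T) (x : T) : nat := #|[set y | e x y]|.

(* An orientation of each edge (u,v) with u before v in enum order,
   used to label the subdivision vertices along the path from u to v. *)
Definition oedge (e : rel T) (x : T * T) : bool :=
  e x.1 x.2 && (enum_rank x.1 < enum_rank x.2)%N.

(* Vertices of G_s: original vertices, plus s new vertices (x,k),
   k < s, for each edge x of G. *)
Definition subdiv_vert (e : rel T) (s : nat) : finType :=
  (T + ({x : T * T | oedge e x} * 'I_s))%type.

(* Adjacency of G_s: edge x = (u,v) becomes the path
   u - (x,0) - (x,1) - ... - (x,s-1) - v.  (For s = 0 it is G.) *)
Definition subdiv (e : rel T) (s : nat) : rel (subdiv_vert e s) :=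
  fun a b =>
  match a, b with
  | inl u, inl v => (s == 0) && e u v
  | inl u, inr (x, k) | inr (x, k), inl u =>
      ((nat_of_ord k == 0) && (u == (val x).1))
      || ((nat_of_ord k == s.-1) && (u == (val x).2))
  | inr (x, k), inr (y, l) =>
      (x == y) && (((nat_of_ord k).+1 == l) || ((nat_of_ord l).+1 == k))
  end.

End Graphs.
Arguments simple_graph {T}. Arguments connected_graph {T}. Arguments edges {T}.
Arguments deg {T}. Arguments oedge {T}. Arguments subdiv_vert {T}. Arguments subdiv {T}.

From mathcomp Require Import all_boot all_order all_algebra ring zify.

(* In G_s every original vertex keeps its degree and every new vertex has
   degree 2, so an edge uv of G contributes to G_s one edge with degrees
   (d_u, 2), one with (2, d_v) and s - 1 edges with (2, 2).  Writing m = |E| and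
   D = sum_u d_u^2 = sum_{uv in E} (d_u + d_v), this gives |E_s| = (s + 1) m,
   sum d_i d_j = 2 D + 4 (s - 1) m and sum (d_i + d_j) = D + 4 s m, and the
   left-hand side collapses to 8 m D - 16 m^2 - D^2 = -(D - 4 m)^2.  All sums
   over edges are computed as halves of sums over ordered adjacent pairs. *)

Set Implicit Arguments.
Unset Strict Implicit.
Unset Printing Implicit Defensive.

Section SimpleGraph.
Variables (U : finType) (r : rel U).
Hypotheses (rsym : symmetric r) (rirr : irreflexive r).

Lemma adj_neq a b : r a b -> a != b.
Proof. by apply: contraTneq => ->; rewrite rirr. Qed.

Lemma set2_eqE (x y a b : U) : x != y ->
  ([set x; y] == [set a; b]) = ((x == a) && (y == b)) || ((x == b) && (y == a)).
Proof.
move=> nxy; apply/idP/idP => [/eqP E|]; last first.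
  by case/orP=> /andP[/eqP-> /eqP->] //; rewrite setUC.
have hx : x \in [set a; b] by rewrite -E !inE eqxx.
have hy : y \in [set a; b] by rewrite -E !inE eqxx orbT.
by move: hx hy nxy; rewrite !inE => /orP[]/eqP-> /orP[]/eqP->; rewrite ?eqxx ?orbT.
Qed.

Lemma sum_edges_double (h : {set U} -> nat) :
  2 * (\sum_(f in edges r) h f) = \sum_a \sum_(b | r a b) h [set a; b].
Proof.
rewrite pair_big_dep /=.
rewrite (partition_big (fun p : U * U => [set p.1; p.2]) (mem (edges r))) /=;
  last by move=> p rp; apply/imsetP; exists p.
rewrite big_distrr; apply: eq_bigr => _ /imsetP[[a b] /= rab ->].
rewrite (eq_bigr (fun _ => h [set a; b])) => [|p /andP[_ /eqP ->] //].
rewrite sum_nat_cond_const; congr (_ * _).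
have -> : [set p : U * U | r p.1 p.2 & [set p.1; p.2] == [set a; b]] = [set (a, b); (b, a)].
  apply/setP => -[x y]; rewrite !inE /= !xpair_eqE.
  case rxy: (r x y) => /=; first by rewrite set2_eqE ?adj_neq.
  by apply/esym/negbTE; apply: contraFN rxy => /orP[]/andP[/eqP-> /eqP->]; rewrite // rsym.
by rewrite cards2 xpair_eqE negb_and adj_neq.
Qed.

Lemma sum_oedge (g : U -> U -> nat) :
  \sum_(x : {x : U * U | oedge r x}) (g (val x).1 (val x).2 + g (val x).2 (val x).1)
  = \sum_a \sum_(b | r a b) g a b.
Proof.
rewrite -(big_sub (mem (oedge r)) (fun p : U * U => g p.1 p.2 + g p.2 p.1)) /=.
rewrite pair_big_dep big_split /=.
rewrite [RHS](bigID (fun p : U * U => enum_rank p.1 < enum_rank p.2)) /=; congr (_ + _).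
rewrite [RHS](reindex_inj (h := fun p : U * U => (p.2, p.1))) /=; last first.
  by move=> [x y] [x' y'] /= [-> ->].
apply: eq_bigl => -[x y] /=; rewrite unfold_in /oedge /= rsym.
case ryx: (r y x) => //=.
have : enum_rank y != enum_rank x by rewrite (inj_eq enum_rank_inj) adj_neq.
by rewrite neq_ltn; case: ltngtP.
Qed.

Lemma sum_edges_big (idx : nat) (op : Monoid.com_law idx) (F : U -> nat) :
  2 * (\sum_(f in edges r) \big[op/idx]_(i in f) F i)
  = \sum_a \sum_(b | r a b) op (F a) (F b).
Proof.
rewrite sum_edges_double; apply: eq_bigr => a _; apply: eq_bigr => b rab.
by rewrite big_setU1 ?big_set1 ?inE ?adj_neq.
Qed.

Lemma handshake : \sum_a deg r a = 2 * #|edges r|.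
Proof.
rewrite -sum1_card sum_edges_double; apply: eq_bigr => a _.
by rewrite sum1dep_card.
Qed.

Lemma card_oedge : #|{: {x : U * U | oedge r x}}| = #|edges r|.
Proof.
apply/eqP; rewrite -(eqn_pmul2l (isT : 0 < 2)) -handshake -sum1_card big_distrr.
by rewrite (sum_oedge (fun _ _ => 1)); apply/eqP/eq_bigr => a _; rewrite sum1dep_card.
Qed.

Lemma sum_edges_deg_sum :
  \sum_(f in edges r) \sum_(i in f) deg r i = \sum_a deg r a ^ 2.
Proof.
have sym_sum : \sum_a \sum_(b | r a b) deg r b = \sum_a \sum_(b | r a b) deg r a.
  rewrite (exchange_big_dep predT) //=.
  by apply: eq_bigr => a _; apply: eq_bigl => b; rewrite rsym.
apply/eqP; rewrite -(eqn_pmul2l (isT : 0 < 2)) sum_edges_big.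
under eq_bigr do rewrite big_split /=.
rewrite big_split /= sym_sum -big_split.
rewrite big_distrr; apply/eqP/eq_bigr => a _.
by rewrite -big_split /= sum_nat_cond_const -/(deg r a); ring.
Qed.
End SimpleGraph.

Lemma sum_nat_eq1 {I : finType} (c : I) : \sum_i (i == c : nat) = 1.
Proof. by rewrite (bigD1 c) //= eqxx big1 // => i /negbTE ->. Qed.

Lemma sum_ord_eq n c : \sum_(k < n) (k == c :> nat : nat) = (c < n).
Proof.
case: ltnP => [lt_cn|le_nc].
  by rewrite (bigD1 (Ordinal lt_cn)) //= eqxx big1 // => k; rewrite -val_eqE => /negbTE ->.
by rewrite big1 // => k _; rewrite ltn_eqF // (leq_trans (ltn_ord k)).
Qed.

Lemma sum1_predE (I : finType) (P : pred I) : \sum_(i | P i) 1 = \sum_i (P i : nat).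
Proof. exact: big_mkcond. Qed.

Lemma sum1_path_adj n (k : 'I_n) :
  \sum_(l < n | (k.+1 == l :> nat) || (l.+1 == k :> nat)) 1 = (k.+1 < n) + (0 < k).
Proof.
rewrite sum1_predE.
transitivity (\sum_(l < n) ((l == k.+1 :> nat : nat) + (0 < k) * (l == k.-1 :> nat))).
  by apply: eq_bigr => l _; case: (val k) => [|j] /=; rewrite ?mul1n //; lia.
rewrite big_split -big_distrr !sum_ord_eq /=.
by rewrite (leq_ltn_trans (leq_pred k) (ltn_ord k)) muln1.
Qed.

Lemma sum_path_deg n : \sum_(k < n) ((k.+1 < n) + (0 < k)) = 2 * n.-1.
Proof.
case: n => [|n]; first by rewrite big_ord0.
rewrite big_split /= big_ord_recr big_ord_recl /= ltnn addn0 add0n.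
under eq_bigr do rewrite ltnS ltn_ord.
by rewrite !sum_nat_const card_ord; lia.
Qed.

Lemma sum_inr (I J : finType) (P : pred (I + J)) (F : I + J -> nat) :
  (forall i, P (inl i) = false) -> \sum_(a | P a) F a = \sum_(j | P (inr j)) F (inr j).
Proof. by move=> P_inl; rewrite big_sumType big_pred0. Qed.

Section Subdivision.
Variables (T : finType) (e : rel T) (s : nat).
Hypotheses (esym : symmetric e) (eirr : irreflexive e) (s_gt0 : 0 < s).
Local Notation Gs := (subdiv e s).

Lemma subdiv_sym : symmetric Gs.
Proof. by move=> [u|[x k]] [v|[y l]] //=; [rewrite esym | rewrite eq_sym orbC]. Qed.

Lemma subdiv_irr : irreflexive Gs.
Proof. by move=> [u|[x k]] /=; rewrite ?eirr ?andbF // eqxx orbb; lia. Qed.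

Lemma subdiv_inl_inl u v : Gs (inl u) (inl v) = false.
Proof. by rewrite /= gtn_eqF. Qed.

Lemma oedge_neq (x : {x : T * T | oedge e x}) : (val x).1 != (val x).2.
Proof. exact: (adj_neq eirr (andP (valP x)).1). Qed.

Lemma subdiv_inl_inrE u x (k : 'I_s) :
  Gs (inl u) (inr (x, k))
  = (k == 0 :> nat) * (u == (val x).1) + (k == s.-1 :> nat) * (u == (val x).2) :> nat.
Proof.
have := oedge_neq x; rewrite /= !mulnb.
by case: (_ == 0); case: (_ == s.-1); case: (eqVneq u (val x).1) => [->|] //= /negbTE ->.
Qed.

Lemma sum1_subdiv_inl_inr u : \sum_(p | Gs (inl u) (inr p)) 1 = deg e u.
Proof.
transitivity (\sum_x \sum_(k < s) (Gs (inl u) (inr (x, k)) : nat)).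
  by rewrite sum1_predE pair_big; apply: eq_bigr => -[x k].
under eq_bigr do under eq_bigr do rewrite subdiv_inl_inrE.
under eq_bigr do rewrite big_split -!big_distrl !sum_ord_eq ltn_predL s_gt0 /= !mul1n.
rewrite (sum_oedge esym eirr (fun a _ => (u == a : nat))).
rewrite (bigD1 u) //= eqxx [X in _ + X]big1 ?addn0; first by rewrite sum1dep_card.
by move=> a /negbTE nau; rewrite big1 // => b _; rewrite eq_sym nau.
Qed.

Lemma deg_subdiv_inl u : deg Gs (inl u) = deg e u.
Proof.
by rewrite /deg -sum1dep_card sum_inr ?sum1_subdiv_inl_inr // => v; apply: subdiv_inl_inl.
Qed.

Lemma sum1_subdiv_attached x k :
  \sum_(u | Gs (inr (x, k)) (inl u)) 1 = (k == 0 :> nat) + (k == s.-1 :> nat).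
Proof.
transitivity (\sum_u (Gs (inl u) (inr (x, k)) : nat)); first exact: sum1_predE.
under eq_bigr do rewrite subdiv_inl_inrE.
by rewrite big_split -!big_distrr !sum_nat_eq1 /= !muln1.
Qed.

Lemma sum1_subdiv_inr_inr x k :
  \sum_(q | Gs (inr (x, k)) (inr q)) 1 = (k.+1 < s) + (0 < k).
Proof.
transitivity (\sum_y \sum_(l < s | (x == y) && ((k.+1 == l :> nat) || (l.+1 == k :> nat))) 1).
  by rewrite pair_big_dep; apply: eq_bigl => -[y l].
rewrite (bigD1 x) //= [X in _ + X]big1 ?addn0.
  by rewrite -sum1_path_adj; apply: eq_bigl => l; rewrite eqxx.
by move=> y; rewrite eq_sym => /negbTE nyx; rewrite big_pred0 // => l; rewrite nyx.
Qed.

Lemma deg_subdiv_inr p : deg Gs (inr p) = 2.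
Proof.
case: p => x k; rewrite /deg -sum1dep_card big_sumType /=.
rewrite sum1_subdiv_attached sum1_subdiv_inr_inr.
have := ltn_ord k; lia.
Qed.

Lemma sum1_subdiv_inner_arcs :
  \sum_p \sum_(q | Gs (inr p) (inr q)) 1 = 2 * s.-1 * #|edges e|.
Proof.
transitivity (\sum_(x : {x : T * T | oedge e x}) \sum_(k < s) ((k.+1 < s) + (0 < k))).
  by rewrite pair_big; apply: eq_bigr => -[x k] _; rewrite sum1_subdiv_inr_inr.
by rewrite sum_path_deg sum_nat_const (card_oedge esym eirr) mulnC.
Qed.

Lemma sum_subdiv_arcs_deg (F : nat -> nat -> nat) :
  \sum_a \sum_(b | Gs a b) F (deg Gs a) (deg Gs b)
  = \sum_u deg e u * (F (deg e u) 2 + F 2 (deg e u)) + 2 * s.-1 * #|edges e| * F 2 2.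
Proof.
have arcs_from_inl u :
    \sum_(b | Gs (inl u) b) F (deg e u) (deg Gs b) = deg e u * F (deg e u) 2.
  rewrite sum_inr => [|v]; last exact: subdiv_inl_inl.
  under eq_bigr do rewrite deg_subdiv_inr.
  by rewrite sum_nat_cond_const -sum1dep_card sum1_subdiv_inl_inr.
have arcs_from_inr p : \sum_(b | Gs (inr p) b) F 2 (deg Gs b)
    = \sum_(u | Gs (inr p) (inl u)) F 2 (deg e u) + (\sum_(q | Gs (inr p) (inr q)) 1) * F 2 2.
  rewrite big_sumType /=; congr (_ + _).
    by apply: eq_bigr => u _; rewrite deg_subdiv_inl.
  by under eq_bigr do rewrite deg_subdiv_inr; rewrite sum_nat_cond_const -sum1dep_card.
rewrite big_sumType.
under eq_bigr do rewrite deg_subdiv_inl arcs_from_inl.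
under [X in _ + X = _]eq_bigr do rewrite deg_subdiv_inr arcs_from_inr.
rewrite big_split /= -big_distrl sum1_subdiv_inner_arcs addnA; congr (_ + _).
rewrite (exchange_big_dep predT) //= -big_split; apply: eq_bigr => u _.
rewrite mulnDr; congr (_ + _).
rewrite sum_nat_cond_const -sum1dep_card -sum1_subdiv_inl_inr.
by congr (_ * _); apply: eq_bigl => -[].
Qed.

Lemma card_edges_subdiv : #|edges Gs| = s.+1 * #|edges e|.
Proof.
apply/eqP; rewrite -(eqn_pmul2l (isT : 0 < 2)) -sum1_card.
rewrite (sum_edges_double subdiv_sym subdiv_irr (fun _ => 1)).
rewrite (sum_subdiv_arcs_deg (fun _ _ => 1)) -big_distrl handshake //.
by case: s s_gt0 => // t _; apply/eqP => /=; ring.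
Qed.

Lemma sum_edges_subdiv_deg_prod :
  \sum_(f in edges Gs) \prod_(i in f) deg Gs i
  = 2 * \sum_u deg e u ^ 2 + 4 * s.-1 * #|edges e|.
Proof.
apply/eqP; rewrite -(eqn_pmul2l (isT : 0 < 2)) (sum_edges_big subdiv_sym subdiv_irr).
rewrite (sum_subdiv_arcs_deg muln) (eq_bigr (fun u => 4 * deg e u ^ 2)) => [|u _];
  last by rewrite /=; ring.
by rewrite -big_distrr /=; apply/eqP; ring.
Qed.

Lemma sum_edges_subdiv_deg_sum :
  \sum_(f in edges Gs) \sum_(i in f) deg Gs i = \sum_u deg e u ^ 2 + 4 * s * #|edges e|.
Proof.
apply/eqP; rewrite -(eqn_pmul2l (isT : 0 < 2)) (sum_edges_big subdiv_sym subdiv_irr).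
rewrite (sum_subdiv_arcs_deg addn).
rewrite (eq_bigr (fun u => 2 * deg e u ^ 2 + 4 * deg e u)) => [|u _]; last by rewrite /=; ring.
rewrite big_split -!big_distrr handshake //.
by case: s s_gt0 => // t _; apply/eqP => /=; ring.
Qed.

End Subdivision.

Import GRing.Theory.
Local Open Scope ring_scope.

Theorem lemma3 (T : finType) (e : rel T) (s : nat) :
  simple_graph e -> connected_graph e -> (exists x y, e x y) -> (0 < s)%N ->
  4 * (#|edges (subdiv e s)|)%:Z
      * (\sum_(f in edges (subdiv e s)) \prod_(i in f) deg (subdiv e s) i)%N%:Z
    - ((\sum_(f in edges (subdiv e s)) \sum_(i in f) deg (subdiv e s) i)%N%:Z) ^+ 2
  = - (\sum_(f in edges e) ((\sum_(i in f) deg e i)%N%:Z - 4)) ^+ 2.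
Proof.
move=> [esym eirr] _ _ s_gt0.
rewrite card_edges_subdiv // sum_edges_subdiv_deg_prod // sum_edges_subdiv_deg_sum //.
rewrite sumrB sumr_const -(big_morph Posz PoszD (erefl 0%:Z)) sum_edges_deg_sum //.
rewrite -(prednK s_gt0) /= !(PoszD, PoszM); ring.
Qed.
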